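(* Let $P$ be a 6-stack and let $Q\subseteq P$ be a subset which, with the induced order, is isomorphic to a tower of sections. If $i\ge0$ is an integer with $P(i)\subseteq Q$ but $P(i+1)\not\subseteq Q$, then $P(i+1)\cap Q=\emptyset$.
   Context: All posets are finite. For a poset $P$ and $p\in P$, the rank $r(p)$ of $p$ is the largest $m$ such that there is a chain $p_0<\dots<p_m=p$ in $P$. $P$ is ranked of rank $r(P)$ if every maximal chain has exactly $r(P)+1$ elements. For $0\le i\le j$, $P(i,j)=\{p\in P:i\le r(p)\le j\}$, $P(i)=P(i,i)$ (induced order). The 6-crown $C_6$ is the poset on $\{x_0,x_1,x_2,y_0,y_1,y_2\}$ whose only strict comparabilities are $x_0<y_0>x_1<y_1>x_2<y_2>x_0$. A 6-stack is a ranked poset $P$ of rank $n\ge1$ such that $P(i,i+1)\cong C_6$ for each $0\le i<n$. The ordinal sum of posets $P_1,\dots,P_k$ ($k\ge1$) is their disjoint union ordered by the orders of the $P_i$ together with $p<q$ whenever $p\in P_i,q\in P_j,i<j$. A section is either a two-element antichain or a poset on the set $\{[i,k]: 0\le i\le 2,\ 0\le k\le n\}$ (with $3(n+1)$ distinct elements), for some $n\ge 1$, such that: (1) $[i,k]<[i,l]$ whenever $0\le k<l\le n$; (2) for each $k$, $\{[0,k],[1,k],[2,k]\}$ is an antichain; (3) $[i,k]<[j,l]$ implies $[i+1,k]<[j+1,l]$ (first indices mod $3$); (4) for each $0\le k<n$ there are $i,j$ with $[i,k]\not<[j,k+1]$. A tower of sections is an ordinal sum of one or more sections. *)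

From mathcomp Require Import all_boot.
Set Implicit Arguments. Unset Strict Implicit. Unset Printing Implicit Defensive.

Record finPoset := FinPoset { car : finType; ltp : rel car }.
Arguments ltp : clear implicits.

Definition is_poset (S : finPoset) : Prop :=
  irreflexive (ltp S) /\ transitive (ltp S).

Definition sub_iso (T : finType) (lt : rel T) (A : T -> Prop) (S : finPoset) : Prop :=
  exists f : car S -> T,
    injective f /\ (forall x, A x <-> exists y, f y = x) /\
    (forall a b, ltp S a b = lt (f a) (f b)).

(* [rank_is lt p m]: m is the largest number such that there is a chain
   p_0 < ... < p_m = p  (the chain is x0 :: s). *)
Definition rank_is (T : finType) (lt : rel T) (p : T) (m : nat) : Prop :=
  (exists (x0 : T) (s : seq T), size s = m /\ path lt x0 s /\ last x0 s = p) /\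
  (forall (x0 : T) (s : seq T), path lt x0 s -> last x0 s = p -> size s <= m).

Definition Pij (T : finType) (lt : rel T) (i j : nat) (p : T) : Prop :=
  exists m, rank_is lt p m /\ i <= m <= j.

Definition is_chain (T : finType) (lt : rel T) (C : {set T}) : Prop :=
  forall x y, x \in C -> y \in C -> x != y -> lt x y || lt y x.

Definition maximal_chain (T : finType) (lt : rel T) (C : {set T}) : Prop :=
  is_chain lt C /\ forall D : {set T}, is_chain lt D -> C \subset D -> D = C.

Definition ranked_of_rank (T : finType) (lt : rel T) (n : nat) : Prop :=
  forall C : {set T}, maximal_chain lt C -> #|C| = n.+1.

(* The 6-crown C_6: x_i = (false, i), y_i = (true, i). *)
Definition c6x (i : nat) : bool * 'I_3 := (false, inord i).
Definition c6y (i : nat) : bool * 'I_3 := (true, inord i).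
Definition c6lt (a b : bool * 'I_3) : bool :=
  (a, b) \in [:: (c6x 0, c6y 0); (c6x 1, c6y 0); (c6x 1, c6y 1);
                 (c6x 2, c6y 1); (c6x 2, c6y 2); (c6x 0, c6y 2)].
Definition C6 : finPoset := @FinPoset ((bool * 'I_3)%type : finType) c6lt.

Definition six_stack (T : finType) (lt : rel T) : Prop :=
  exists n, 1 <= n /\ ranked_of_rank lt n /\
    forall i, i < n -> sub_iso lt (Pij lt i i.+1) C6.

Definition s3 (i : 'I_3) : 'I_3 := inord ((i + 1) %% 3).

(* A section: a two-element antichain, or a poset on
   {[i,k] : 0 <= i <= 2, 0 <= k <= n} (n >= 1, 3(n+1) distinct elements,
   labelled by the bijection f) satisfying (1)-(4). *)
Definition is_section (S : finPoset) : Prop :=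
  is_poset S /\
  ( (#|car S| = 2 /\ forall x y : car S, ~~ ltp S x y)
  \/ exists n : nat, 1 <= n /\
     exists f : 'I_3 * 'I_n.+1 -> car S, bijective f /\
       (forall (i : 'I_3) (k l : 'I_n.+1), k < l -> ltp S (f (i, k)) (f (i, l))) /\
       (forall (i j : 'I_3) (k : 'I_n.+1), ~~ ltp S (f (i, k)) (f (j, k))) /\
       (forall (i j : 'I_3) (k l : 'I_n.+1),
                    ltp S (f (i, k)) (f (j, l)) -> ltp S (f (s3 i, k)) (f (s3 j, l))) /\
       (forall k : nat, k < n -> exists i j : 'I_3,
                    ~~ ltp S (f (i, inord k)) (f (j, inord k.+1)))).

Definition fp_default : finPoset := @FinPoset (void : finType) (fun _ _ => false).

Definition ordsum_car (l : seq finPoset) : finType :=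
  ({j : 'I_(size l) & car (nth fp_default l j)} : finType).
Definition ordsum_lt (l : seq finPoset) (u v : ordsum_car l) : bool :=
  (tag u < tag v) || ((tag u == tag v) && ltp _ (tagged u) (tagged_as u v)).
Definition ordsum (l : seq finPoset) : finPoset := @FinPoset (ordsum_car l) (@ordsum_lt l).

Definition iso_tower (T : finType) (lt : rel T) (Q : {set T}) : Prop :=
  exists l : seq finPoset, 0 < size l /\
    (forall j, j < size l -> is_section (nth fp_default l j)) /\
    sub_iso lt (fun x => x \in Q) (ordsum l).

From mathcomp Require Import all_boot zify boolp.
Set Implicit Arguments. Unset Strict Implicit. Unset Printing Implicit Defensive.

(* In a 6-stack every level has three elements, consecutive levels form a
   crown, and x < z as soon as rk z >= rk x + 2; hence an element above one
   element of rank i and not above another one has rank exactly i+1.  The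
   elements of rank i are pairwise incomparable, so they lie in one section of
   the tower, and so does an element p of rank i+1 in Q, as p misses one of
   them.  As p lies above an element of rank i, that section is a grid [a, k]
   rather than an antichain; the crown structure forces the
   three elements of rank i to be a row [_, k], and then the row through p to
   consist of three elements of rank i+1, i.e. of all of P(i+1). *)

Section Rank.

Variables (T : finType) (lt : rel T).
Hypotheses (lt_irr : irreflexive lt) (lt_trans : transitive lt).

Lemma path_size_lt_card x0 s : path lt x0 s -> size s < #|T|.
Proof.
move=> xs_path; have /card_uniqP card_xs := @sorted_uniq _ _ lt_trans lt_irr (x0 :: s) xs_path.
by rewrite -[_ < _]/(size (x0 :: s) <= #|T|) -card_xs max_card.
Qed.

Lemma rank_exists p : exists m, rank_is lt p m.
Proof.
pose ending_chain n :=
  `[< exists x0 s, size s = n /\ path lt x0 s /\ last x0 s = p >].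
have ex0 : exists n, ending_chain n by exists 0; apply/asboolP; exists p, [::].
have ub n : ending_chain n -> n <= #|T|.
  by move=> /asboolP [x0 [s [<- [/path_size_lt_card /ltnW]]]].
case: (ex_maxnP ex0 ub) => m /asboolP Pm maxm.
by exists m; split=> // x0 s xs_path xs_last; apply/maxm/asboolP; exists x0, s.
Qed.

Lemma rank_is_unique p m m' : rank_is lt p m -> rank_is lt p m' -> m = m'.
Proof.
move=> [[x0 [s [<- [xs_path xs_last]]]] max_m] [[y0 [t [<- [yt_path yt_last]]]] max_m'].
by apply/eqP; rewrite eqn_leq (max_m' _ _ xs_path xs_last) (max_m _ _ yt_path yt_last).
Qed.

Lemma rank_is_lt x y a b : rank_is lt x a -> rank_is lt y b -> lt x y -> a < b.
Proof.
move=> [[x0 [s [<- [xs_path xs_last]]]] _] [_ maxb] xy.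
have := maxb x0 (rcons s y).
by rewrite size_rcons last_rcons rcons_path xs_path xs_last xy; apply.
Qed.

Definition chainb (C : {set T}) :=
  [forall x, forall y, [&& x \in C, y \in C & x != y] ==> lt x y || lt y x].

Lemma chainbP C : reflect (is_chain lt C) (chainb C).
Proof.
apply: (iffP forallP) => [H x y xC yC xy | H x].
  by have /forallP /(_ y) /implyP := H x; apply; rewrite xC yC.
by apply/forallP => y; apply/implyP => /and3P [xC yC xy]; exact: H.
Qed.

Lemma rank_is_le_ranked n p r : ranked_of_rank lt n -> rank_is lt p r -> r <= n.
Proof.
move=> ranked [[x0 [s [<- [xs_path _]]]] _].
pose C := [set x in x0 :: s].
have Cchain : chainb C.
  apply/chainbP => x y; rewrite !in_set => xs ys.
  have lt_index := @sorted_ltn_index _ _ lt_trans (x0 :: s) xs_path.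
  case: (ltngtP (index x (x0 :: s)) (index y (x0 :: s))) => [xy|yx|/(index_inj x0 xs ys) ->].
  - by rewrite lt_index.
  - by rewrite (lt_index y x) ?orbT.
  - by rewrite eqxx.
have [D /maxsetP [/chainbP Dchain Dmax] CD] := maxset_exists Cchain.
have card_C : #|C| = size (x0 :: s).
  by rewrite cardsE; apply/card_uniqP/(@sorted_uniq _ _ lt_trans lt_irr (x0 :: s)).
have := subset_leq_card CD; rewrite card_C (ranked D) //.
by split=> // D' /chainbP D'chain DD'; apply: Dmax.
Qed.

End Rank.

Lemma val_s3 (a : 'I_3) : s3 a = a.+1 %% 3 :> nat.
Proof. by rewrite inordK addn1 // ltn_pmod. Qed.

Lemma s3K (a : 'I_3) : s3 (s3 (s3 a)) = a.
Proof. by apply/val_inj; rewrite /= !val_s3; case: a => [[|[|[|?]]] ?]. Qed.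

Lemma s3_inj : injective s3.
Proof. exact: can_inj (s3 \o s3) s3K. Qed.

Lemma s3_neq (a : 'I_3) : [&& a != s3 a, a != s3 (s3 a) & s3 a != s3 (s3 a)].
Proof. by rewrite -!val_eqE /= !val_s3; case: a => [[|[|[|?]]] ?]. Qed.

Lemma I3_cases (a d : 'I_3) : [\/ a = d, a = s3 d | a = s3 (s3 d)].
Proof.
suff : [|| a == d :> nat, a == s3 d :> nat | a == s3 (s3 d) :> nat].
  by move=> /or3P [] /eqP/val_inj ->; [apply: Or31 | apply: Or32 | apply: Or33].
by rewrite !val_s3; case: a d => [[|[|[|?]]] ?] [[|[|[|?]]] ?].
Qed.

Lemma I3_cover (a b c d : 'I_3) : a != b -> a != c -> b != c -> [\/ d = a, d = b | d = c].
Proof.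
rewrite -!val_eqE /= => ab ac bc.
suff : [|| d == a :> nat, d == b :> nat | d == c :> nat].
  by move=> /or3P [] /eqP/val_inj ->; [apply: Or31 | apply: Or32 | apply: Or33].
move: ab ac bc.
by case: a b c d => [[|[|[|?]]] ?] [[|[|[|?]]] ?] [[|[|[|?]]] ?] [[|[|[|?]]] ?].
Qed.

Lemma c6lt_bottom_top (s t : 'I_3) : c6lt (false, s) (true, t) = (s != s3 (s3 t)).
Proof.
rewrite /c6lt /c6x /c6y !inE !xpair_eqE /= -!val_eqE /= !val_s3 !inordK //.
by case: s t => [[|[|[|?]]] ?] [[|[|[|?]]] ?].
Qed.

Definition in_ordsum (l : seq finPoset) (J : 'I_(size l)) (s : car (nth fp_default l J)) :
  ordsum_car l := Tagged (fun j : 'I_(size l) => car (nth fp_default l j)) s.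

Lemma ordsum_lt_in l (J : 'I_(size l)) (s s' : car (nth fp_default l J)) :
  ordsum_lt (in_ordsum s) (in_ordsum s') = ltp _ s s'.
Proof. by rewrite /ordsum_lt /= ltnn eqxx tagged_asE. Qed.

Lemma in_ordsum_inj l J : injective (@in_ordsum l J).
Proof. move=> s s'; exact: eq_from_Tagged. Qed.

Lemma ordsum_tagP l J (u : ordsum_car l) : tag u = J -> exists s, u = @in_ordsum l J s.
Proof. by case: u => J' s /= <-; exists s. Qed.

Lemma ordsum_incomparable_tag l (u v : ordsum_car l) :
  ~~ ordsum_lt u v -> ~~ ordsum_lt v u -> tag u = tag v.
Proof. by rewrite /ordsum_lt; case: (ltngtP (tag u) (tag v)) => // /val_inj. Qed.

Section SixStack.

Variables (T : finType) (lt : rel T).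
Hypotheses (lt_irr : irreflexive lt) (lt_trans : transitive lt).
Variable rk : T -> nat.
Hypothesis rkP : forall x, rank_is lt x (rk x).
Variable n : nat.
Hypotheses (ranked : ranked_of_rank lt n)
  (crowns : forall j, j < n -> sub_iso lt (Pij lt j j.+1) C6).

Lemma rk_lt x y : lt x y -> rk x < rk y.
Proof. exact: rank_is_lt (rkP x) (rkP y). Qed.

Lemma rk_le x : rk x <= n.
Proof. exact: (rank_is_le_ranked lt_irr lt_trans ranked (rkP x)). Qed.

Lemma PijE a b x : Pij lt a b x <-> a <= rk x <= b.
Proof.
split=> [[m [/rank_is_unique/(_ (rkP x)) ->]] // | ab].
by exists (rk x).
Qed.

Definition level_crown (j : nat) (g : bool * 'I_3 -> T) :=
  [/\ injective g, forall u v, lt (g u) (g v) = c6lt u v,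
      forall (b : bool) c, rk (g (b, c)) = (if b then j.+1 else j) &
      forall (b : bool) x, rk x = (if b then j.+1 else j) -> exists c, x = g (b, c)].

Lemma level_crown_exists j : j < n -> exists g, level_crown j g.
Proof.
move=> /crowns [g [g_inj [g_onto g_lt0]]]; exists g.
have g_lt u v : lt (g u) (g v) = c6lt u v by rewrite -g_lt0.
have g_rank u : j <= rk (g u) <= j.+1 by apply/PijE/g_onto; exists u.
have g_rank_bool b c : rk (g (b, c)) = (if b then j.+1 else j).
  have := rk_lt (x := g (false, c)) (y := g (true, c)).
  rewrite g_lt c6lt_bottom_top; case/and3P: (s3_neq c) => _ + _ => /[swap] /[apply].
  move: (g_rank (false, c)) (g_rank (true, c)).
  by case: b; set r0 := rk (g (false, c)); set r1 := rk (g (true, c)); lia.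
split=> // b x xb.
have /g_onto [[b' c] xc] : Pij lt j j.+1 x by apply/PijE; move: xb; case: b => ->; lia.
exists c; rewrite -xc; congr (g (_, c)).
by move: xb; rewrite -xc g_rank_bool; case: b b' {xc} => [] []; lia.
Qed.

Lemma card_level j (b : bool) : j < n -> #|[set x | rk x == (if b then j.+1 else j)]| = 3.
Proof.
case/level_crown_exists => g [g_inj _ g_rk g_onto].
have -> : [set x | rk x == (if b then j.+1 else j)] = [set g (b, c) | c : 'I_3].
  apply/setP => x; rewrite inE; apply/eqP/imsetP => [/g_onto [c ->] | [c _ ->]] //.
  by exists c.
by rewrite card_imset ?card_ord // => c c' /g_inj [].
Qed.

Lemma level_image j (b : bool) (e : 'I_3 -> T) : j < n -> injective e ->
  (forall a, rk (e a) = (if b then j.+1 else j)) ->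
  forall x, rk x = (if b then j.+1 else j) -> exists a, x = e a.
Proof.
move=> jn e_inj e_rk x xj.
have : [set e a | a : 'I_3] = [set x | rk x == (if b then j.+1 else j)].
  apply/eqP; rewrite eqEcard card_level // card_imset ?card_ord // andbT.
  by apply/subsetP => _ /imsetP [a _ ->]; rewrite inE e_rk.
by move/setP/(_ x); rewrite inE xj eqxx => /imsetP [a _ ->]; exists a.
Qed.

Section CrownLevel.

Variable j : nat.
Hypothesis j_lt_n : j < n.

Lemma exists_lt_top z : rk z = j.+1 -> exists w, rk w = j /\ lt w z.
Proof.
have [g [_ g_lt g_rk g_onto]] := level_crown_exists j_lt_n.
move=> /(g_onto true) [t ->]; exists (g (false, t)).
by rewrite g_rk g_lt c6lt_bottom_top; case/and3P: (s3_neq t).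
Qed.

Lemma two_lt_top z : rk z = j.+1 ->
  exists w1 w2, [/\ w1 != w2, rk w1 = j, rk w2 = j, lt w1 z & lt w2 z].
Proof.
have [g [g_inj g_lt g_rk g_onto]] := level_crown_exists j_lt_n.
move=> /(g_onto true) [t ->]; exists (g (false, t)), (g (false, s3 t)).
rewrite !g_rk !g_lt !c6lt_bottom_top (inj_eq g_inj) xpair_eqE /=.
by case/and3P: (s3_neq t).
Qed.

Lemma exists_nlt_top z : rk z = j.+1 -> exists w, rk w = j /\ ~~ lt w z.
Proof.
have [g [_ g_lt g_rk g_onto]] := level_crown_exists j_lt_n.
move=> /(g_onto true) [t ->]; exists (g (false, s3 (s3 t))).
by rewrite g_rk g_lt c6lt_bottom_top eqxx.
Qed.

Lemma nlt_top_unique z w1 w2 : rk z = j.+1 -> rk w1 = j -> rk w2 = j ->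
  ~~ lt w1 z -> ~~ lt w2 z -> w1 = w2.
Proof.
have [g [_ g_lt _ g_onto]] := level_crown_exists j_lt_n.
move=> /(g_onto true) [t ->] /(g_onto false) [s1 ->] /(g_onto false) [s2 ->].
by rewrite !g_lt !c6lt_bottom_top !negbK => /eqP -> /eqP ->.
Qed.

Lemma nlt_bottom_unique w z1 z2 : rk w = j -> rk z1 = j.+1 -> rk z2 = j.+1 ->
  ~~ lt w z1 -> ~~ lt w z2 -> z1 = z2.
Proof.
have [g [_ g_lt _ g_onto]] := level_crown_exists j_lt_n.
move=> /(g_onto false) [s ->] /(g_onto true) [t1 ->] /(g_onto true) [t2 ->].
by rewrite !g_lt !c6lt_bottom_top !negbK => /eqP -> /eqP /s3_inj /s3_inj ->.
Qed.

End CrownLevel.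

(* z lies above two distinct elements of the level below it, and an element
   one level further down is below at least one of them. *)
Lemma lt_of_rank_gap x z : rk x + 2 <= rk z -> lt x z.
Proof.
have [r] := ubnP (rk z); elim: r x z => // r IH x z zr gap.
have [j zj] : exists j, rk z = j.+1 by exists (rk z).-1; lia.
have jn : j < n by rewrite -ltnS -zj ltnS rk_le.
have [w1 [w2 [w12 w1j w2j w1z w2z]]] := two_lt_top jn zj.
have [xj | jx] := leqP (rk x + 2) j.
  by apply: lt_trans w1z; apply: IH; lia.
have xn : rk x < n by lia.
case/boolP: (lt x w1) => [xw1 | nxw1]; first exact: lt_trans w1z.
case/boolP: (lt x w2) => [xw2 | nxw2]; first exact: lt_trans w2z.
by move: w12; rewrite (nlt_bottom_unique xn erefl _ _ nxw1 nxw2) ?eqxx //; lia.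
Qed.

Lemma rk_eq_succ y z w j : rk y = j -> lt y z -> rk w = j -> ~~ lt w z -> rk z = j.+1.
Proof.
move=> yj /rk_lt yz wj wz; apply/eqP; rewrite eqn_leq -yj yz andbT leqNgt.
by apply: contra wz => zj; apply: lt_of_rank_gap; lia.
Qed.

Section Grid.

(* [E (a, k)] is the element [a, k] of a section of the tower, seen in P. *)
Variables (i N : nat) (E : 'I_3 * 'I_N.+1 -> T).
Hypotheses (i_lt_n : i < n) (E_inj : injective E)
  (E_lt_col : forall a (k l : 'I_N.+1), k < l -> lt (E (a, k)) (E (a, l)))
  (E_row_antichain : forall a b k, ~~ lt (E (a, k)) (E (b, k)))
  (E_lt_s3 : forall a b k l, lt (E (a, k)) (E (b, l)) -> lt (E (s3 a, k)) (E (s3 b, l))).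

Lemma grid_lt_index a b k l : lt (E (a, k)) (E (b, l)) -> k < l.
Proof.
case: (ltngtP k l) => // [lk | /val_inj <-] kl.
  by have := E_row_antichain a b k; rewrite (lt_trans kl (E_lt_col _ lk)).
by rewrite (negbTE (E_row_antichain _ _ _)) in kl.
Qed.

Lemma grid_lt_s3E a b k l : lt (E (s3 a, k)) (E (s3 b, l)) = lt (E (a, k)) (E (b, l)).
Proof. by apply/idP/idP => [/E_lt_s3/E_lt_s3 | /E_lt_s3]; rewrite ?s3K. Qed.

Lemma grid_rank_col_inj a k l : rk (E (a, k)) = rk (E (a, l)) -> k = l.
Proof.
case: (ltngtP k l) => [kl | lk | /val_inj //] kl_rk.
  by have := rk_lt (E_lt_col a kl); rewrite kl_rk ltnn.
by have := rk_lt (E_lt_col a lk); rewrite kl_rk ltnn.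
Qed.

(* Otherwise E (a, l) and E (c, l) both have rank i+1 and both miss E (b, l). *)
Lemma grid_index_le a b c k l m : a != b -> c != a -> c != b ->
  rk (E (a, k)) = i -> rk (E (b, l)) = i -> rk (E (c, m)) = i -> l <= k.
Proof.
move=> ab ca cb ak bl cm; rewrite leqNgt; apply/negP => kl.
have al : rk (E (a, l)) = i.+1.
  exact: rk_eq_succ ak (E_lt_col a kl) bl (E_row_antichain b a l).
have cl_lt : lt (E (c, m)) (E (a, l)).
  apply/negPn/negP => ncl.
  have [c_b _] := E_inj (nlt_top_unique i_lt_n al cm bl ncl (E_row_antichain b a l)).
  by rewrite c_b eqxx in cb.
have cl : rk (E (c, l)) = i.+1.
  exact: rk_eq_succ cm (E_lt_col c (grid_lt_index cl_lt)) bl (E_row_antichain b c l).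
have /E_inj [] :=
  nlt_bottom_unique i_lt_n bl al cl (E_row_antichain b a l) (E_row_antichain b c l).
by move/eqP; rewrite eq_sym (negbTE ca).
Qed.

Lemma grid_row_rank : (forall w, rk w = i -> exists x, w = E x) ->
  exists k, forall a, rk (E (a, k)) = i.
Proof.
move=> level_in_E; have [g [g_inj _ g_rk _]] := level_crown_exists i_lt_n.
have E_neq c c' x y : g (false, c) = E x -> g (false, c') = E y -> c != c' -> x != y.
  by move=> gx gy; apply: contra_neq => xy; move: gx; rewrite xy -gy => /g_inj [].
have col_neq a a' k k' :
    rk (E (a, k)) = i -> rk (E (a', k')) = i -> (a, k) != (a', k') -> a != a'.
  move=> ak a'k'; apply: contra_neq => aa'; rewrite aa' in ak *.
  by rewrite (grid_rank_col_inj (etrans ak (esym a'k'))).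
pose c0 : 'I_3 := ord0; case/and3P: (s3_neq c0) => c01 c02 c12.
have [[a0 k0] e0] := level_in_E _ (g_rk false c0).
have [[a1 k1] e1] := level_in_E _ (g_rk false (s3 c0)).
have [[a2 k2] e2] := level_in_E _ (g_rk false (s3 (s3 c0))).
have r0 : rk (E (a0, k0)) = i by rewrite -e0 g_rk.
have r1 : rk (E (a1, k1)) = i by rewrite -e1 g_rk.
have r2 : rk (E (a2, k2)) = i by rewrite -e2 g_rk.
have a01 := col_neq _ _ _ _ r0 r1 (E_neq _ _ _ _ e0 e1 c01).
have a02 := col_neq _ _ _ _ r0 r2 (E_neq _ _ _ _ e0 e2 c02).
have a12 := col_neq _ _ _ _ r1 r2 (E_neq _ _ _ _ e1 e2 c12).
have [a10 a20 a21] : [/\ a1 != a0, a2 != a0 & a2 != a1] by rewrite !(eq_sym a2) eq_sym.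
have k10 : k1 = k0.
  apply/val_inj/anti_leq.
  by rewrite (grid_index_le a01 a20 a21 r0 r1 r2) (grid_index_le a10 a21 a20 r1 r0 r2).
have k20 : k2 = k0.
  apply/val_inj/anti_leq.
  by rewrite (grid_index_le a02 a10 a12 r0 r2 r1) (grid_index_le a20 a12 a10 r2 r0 r1).
rewrite k10 in r1; rewrite k20 in r2.
by exists k0 => a; case: (I3_cover a a01 a02 a12) => ->.
Qed.

Lemma grid_row_succ k d mu : (forall a, rk (E (a, k)) = i) -> rk (E (d, mu)) = i.+1 ->
  forall a, rk (E (a, mu)) = i.+1.
Proof.
move=> row_k d_mu.
have level_row w : rk w = i -> exists a, w = E (a, k).
  by apply: (level_image (b := false) (e := fun a => E (a, k))) => // a a' /E_inj [].
have [_ [/level_row [a' ->] /grid_lt_index k_mu]] := exists_lt_top i_lt_n d_mu.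
have [_ [/level_row [b ->] b_d]] := exists_nlt_top i_lt_n d_mu.
move=> a; case: (I3_cases a d) => ->.
- exact: rk_eq_succ (row_k d) (E_lt_col d k_mu) (row_k b) b_d.
- by apply: rk_eq_succ (row_k _) (E_lt_col _ k_mu) (row_k (s3 b)) _; rewrite grid_lt_s3E.
- by apply: rk_eq_succ (row_k _) (E_lt_col _ k_mu) (row_k (s3 (s3 b))) _; rewrite !grid_lt_s3E.
Qed.

End Grid.

Section Tower.

Variables (Q : {set T}) (l : seq finPoset) (F : ordsum_car l -> T).
Hypotheses (sections : forall j, j < size l -> is_section (nth fp_default l j))
  (F_inj : injective F) (F_onto : forall x, x \in Q <-> exists u, F u = x)
  (F_lt : forall u v, ordsum_lt u v = lt (F u) (F v)).

(* Elements of distinct summands of an ordinal sum are comparable. *)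
Lemma level_in_summand i : i < n -> (forall w, rk w = i -> w \in Q) ->
  exists J, forall x, x \in Q -> (exists w, [/\ rk w = i, ~~ lt w x & ~~ lt x w]) ->
    exists s, x = F (@in_ordsum l J s).
Proof.
move=> i_lt_n level_Q.
have incomparable_tag u v : ~~ lt (F u) (F v) -> ~~ lt (F v) (F u) -> tag u = tag v.
  by rewrite -!F_lt; apply: ordsum_incomparable_tag.
have level_nlt w w' : rk w = i -> rk w' = i -> ~~ lt w w'.
  by move=> wi w'i; apply/negP => /rk_lt; rewrite wi w'i ltnn.
have [g [_ _ g_rk _]] := level_crown_exists i_lt_n.
have g0i : rk (g (false, ord0)) = i := g_rk false ord0.
have [u0 u0_eq] := (F_onto _).1 (level_Q _ g0i).
exists (tag u0) => _ /F_onto [u <-] [w [wi nlt_wu nlt_uw]].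
have [uw uw_eq] := (F_onto w).1 (level_Q _ wi).
have uw_u0 : tag uw = tag u0 by apply: incomparable_tag; rewrite uw_eq u0_eq; apply: level_nlt.
have : tag u = tag uw by apply: incomparable_tag; rewrite uw_eq.
by rewrite uw_u0 => /ordsum_tagP [s ->]; exists s.
Qed.

Lemma tower_level_succ i : i < n -> (forall w, rk w = i -> w \in Q) ->
  forall p q, rk p = i.+1 -> rk q = i.+1 -> p \in Q -> q \in Q.
Proof.
move=> i_lt_n level_Q p q pi qi pQ.
have [J in_J] := level_in_summand i_lt_n level_Q.
pose G (s : car (nth fp_default l J)) := F (in_ordsum s).
have G_lt s s' : lt (G s) (G s') = ltp _ s s' by rewrite /G -F_lt ordsum_lt_in.
have level_G w : rk w = i -> exists s, w = G s.
  by move=> wi; apply: in_J (level_Q _ wi) _; exists w; rewrite lt_irr.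
have [sp p_sp] : exists s, p = G s.
  have [w [wi w_p]] := exists_nlt_top i_lt_n pi.
  apply: in_J pQ _; exists w; split=> //; apply/negP => /rk_lt; rewrite pi wi; lia.
have [[_ _] [[_ S_anti] | [N [_ [f [[finv fK finvK] [f_col [f_row [f_s3 _]]]]]]]]] :=
  sections (ltn_ord J).
  have [_ [/level_G [s ->]]] := exists_lt_top i_lt_n pi.
  by rewrite p_sp G_lt (negbTE (S_anti _ _)).
pose E x := G (f x).
have E_inj : injective E by move=> x y /F_inj /in_ordsum_inj /(can_inj fK).
have E_lt_col a (k k' : 'I_N.+1) : k < k' -> lt (E (a, k)) (E (a, k')).
  by rewrite G_lt; apply: f_col.
have E_row_antichain a b k : ~~ lt (E (a, k)) (E (b, k)) by rewrite G_lt f_row.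
have E_lt_s3 a b k k' : lt (E (a, k)) (E (b, k')) -> lt (E (s3 a, k)) (E (s3 b, k')).
  by rewrite !G_lt; apply: f_s3.
have [k row_k] : exists k, forall a, rk (E (a, k)) = i.
  apply: grid_row_rank E_inj E_lt_col E_row_antichain _ => // w /level_G [s ->].
  by exists (finv s); rewrite /E finvK.
have p_mu : rk (E (finv sp)) = i.+1 by rewrite /E finvK -p_sp.
move: (finv sp) p_mu => [d mu] p_mu.
have row_mu := grid_row_succ i_lt_n E_inj E_lt_col E_row_antichain E_lt_s3 row_k p_mu.
have row_inj : injective (fun a => E (a, mu)) by move=> a a' /E_inj [].
have [a ->] := level_image (b := true) i_lt_n row_inj row_mu qi.
by apply/F_onto; eexists.
Qed.

End Tower.

End SixStack.

Theorem lemma5p2 (T : finType) (lt : rel T)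
  (lt_irr : irreflexive lt) (lt_trans : transitive lt)
  (Hstack : six_stack lt) (Q : {set T}) (HQ : iso_tower lt Q) (i : nat)
  (Hi : forall p, Pij lt i i p -> p \in Q)
  (Hi1 : ~ (forall p, Pij lt i.+1 i.+1 p -> p \in Q)) :
  forall p, Pij lt i.+1 i.+1 p -> p \notin Q.
Proof.
have [rk rkP] : exists rk : T -> nat, forall x, rank_is lt x (rk x).
  exact: fin_all_exists (rank_exists lt_irr lt_trans).
have [n [_ [ranked crowns]]] := Hstack.
have [l [_ [sections [F [F_inj [F_onto F_lt]]]]]] := HQ.
move=> p /(PijE rkP) p_rank; apply/negP => pQ; apply: Hi1 => q /(PijE rkP) q_rank.
have pi : rk p = i.+1 by lia.
have i_lt_n : i < n by rewrite -ltnS -pi ltnS (rk_le lt_irr lt_trans rkP ranked).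
apply: (tower_level_succ lt_irr lt_trans rkP ranked crowns sections F_inj F_onto F_lt
          i_lt_n _ pi _ pQ).
- by move=> w wi; apply/Hi/(PijE rkP); rewrite wi leqnn.
- lia.
Qed.
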